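(* Let $f:(0,\infty)\to\mathbb{R}$ be real analytic and not identically zero. Let $\mathcal I=\{x\in(0,\infty):f(x)=0\}$. Assume that: (1) for every sequence $x_j\in(0,\infty)$ with $x_j\to0$ or $x_j\to\infty$ and such that $\mathrm{dist}(x_j,\mathcal I)\to0$, we have $\kappa(f,x_j)\to\infty$; (2) both as $x\to0$ and as $x\to\infty$ we have $\limsup|H(f,x)|\leq C$ for some constant $C>0$, where $H(f,x)=\frac{x^2f(x)f''(x)}{f(x)^2+x^2f'(x)^2}$. The part of this hypothesis concerning $x\to0$ is automatically satisfied if $f$ admits an analytic extension to $(-\epsilon,\infty)$ for some $\epsilon>0$. Then $f$ is amenable.
   Context: Relative distance on $\mathbb{R}$: $\mathrm{dist}(x,y)=0$ if $x=y=0$, $\mathrm{dist}(x,y)=|\log(y/x)|$ if $xy>0$, and $\mathrm{dist}(x,y)=\infty$ otherwise; for a set $S$, $\mathrm{dist}(x,S)=\inf_{s\in S}\mathrm{dist}(x,s)$. For a real analytic function $f$ on an open set $\Omega\subseteq\mathbb{R}$, not identically zero, the condition number is $\kappa(f,x)=0$ if $x=0$, $\kappa(f,x)=\infty$ if $x\neq0$ and $f(x)=0$, and $\kappa(f,x)=|x|\,|f'(x)|/|f(x)|$ otherwise; set $\mu(f,x)=1+\kappa(f,x)$. The function $f:\Omega\to\mathbb{R}$ is called amenable if there is a constant $C>0$ such that for every $x\in\Omega$ with $\kappa(f,x)<\infty$, the set $B_x=\{y\in\mathbb{R}:\mathrm{dist}(y,x)<1/(C\mu(f,x))\}$ is contained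 in $\Omega$, and $\mu(f,y)\leq C\mu(f,x)$ for all $y\in B_x$. *)

From Stdlib Require Import Reals Lra.
From Coquelicot Require Import Coquelicot.
Open Scope R_scope.

Definition reldist (x y : R) : Rbar :=
  if Req_EM_T x 0 then (if Req_EM_T y 0 then Finite 0
                        else p_infty)
  else if Rlt_dec 0 (x * y) then Finite (Rabs (ln (y / x)))
  else p_infty.

Definition reldist_set (x : R) (S : R -> Prop) : Rbar :=
  Rbar_glb (fun d => exists s, S s /\ d = reldist x s).

Definition real_analytic_on (Omega : R -> Prop) (f : R -> R) : Prop :=
  forall x0, Omega x0 ->
    exists (a : nat -> R) (r : R), 0 < r /\
      forall x, Rabs (x - x0) < r -> Omega x /\ is_pseries a (x - x0) (f x).

Definition kappa (f : R -> R) (x : R) : Rbar :=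
  if Req_EM_T x 0 then Finite 0
  else if Req_EM_T (f x) 0 then p_infty
  else Finite (Rabs x * Rabs (Derive f x) / Rabs (f x)).

Definition mu (f : R -> R) (x : R) : Rbar := Rbar_plus (Finite 1) (kappa f x).

Definition amenable (Omega : R -> Prop) (f : R -> R) : Prop :=
  exists C : R, 0 < C /\
    forall x, Omega x -> is_finite (kappa f x) ->
      (forall y, Rbar_lt (reldist y x) (Finite (/ (C * real (mu f x)))) -> Omega y) /\
      (forall y, Rbar_lt (reldist y x) (Finite (/ (C * real (mu f x)))) ->
                 Rbar_le (mu f y) (Finite (C * real (mu f x)))).

Definition Rbar_seq_cv (u : nat -> Rbar) (l : Rbar) : Prop :=
  match l with
  | Finite l0 => forall eps, 0 < eps -> exists N, forall n, (N <= n)%nat ->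
                   exists r, u n = Finite r /\ Rabs (r - l0) < eps
  | p_infty => forall M, exists N, forall n, (N <= n)%nat -> Rbar_lt (Finite M) (u n)
  | m_infty => forall M, exists N, forall n, (N <= n)%nat -> Rbar_lt (u n) (Finite M)
  end.

Definition Hfun (f : R -> R) (x : R) : R :=
  x ^ 2 * f x * Derive_n f 2 x / (f x ^ 2 + x ^ 2 * (Derive f x) ^ 2).

Definition pos_half_line (x : R) : Prop := 0 < x.

From Stdlib Require Import Reals Lra Lia Psatz Classical Arith Wf_nat.
From Coquelicot Require Import Coquelicot.
Open Scope R_scope.

(* Put g(t) = f(e^t) and h = g'/g, so that mu(f,x) = 1 + |h(ln x)|.  A bound |H(f,x)| <= K
   on (0,oo) becomes the Riccati-type inequality |h'| <= L (1 + |h|)^2 with L = K + 2, so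
   1/sqrt(1 + h^2) is 2L-Lipschitz.  Hence on a log-interval of length 1/(4 L mu(f,x)) around
   ln x the function |h| at most doubles and, (ln g^2)' = 2h being bounded there, g has no
   zero: this is amenability with C = 4L + 3.
   H is bounded near 0 and oo by hypothesis (2) and on compact subintervals by analyticity:
   near a zero of order m, f, f' and f'' vanish to orders m, m - 1 and m - 2, which keeps H
   bounded. *)

Lemma continuity_pt_of_ex_derive (phi : R -> R) (x : R) :
  ex_derive phi x -> continuity_pt phi x.
Proof.
  intros Hd. apply continuity_pt_filterlim.
  apply (@ex_derive_continuous R_AbsRing R_NormedModule), Hd.
Qed.

Lemma continuity_pt_eps_delta (phi : R -> R) (x eps : R) :
  continuity_pt phi x -> 0 < eps ->
  exists d, 0 < d /\ forall y, Rabs (y - x) < d -> Rabs (phi y - phi x) < eps.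
Proof.
  intros Hc Heps.
  destruct (proj1 (continuity_pt_locally phi x) Hc (mkposreal eps Heps)) as [d Hd].
  exists d. split; [apply cond_pos|]. intros y Hy. exact (Hd y Hy).
Qed.

Lemma continuity_pt_locally_bounded (phi : R -> R) (x : R) :
  continuity_pt phi x ->
  exists e K, 0 < e /\ forall y, Rabs (y - x) < e -> Rabs (phi y) <= K.
Proof.
  intros Hc. destruct (continuity_pt_eps_delta phi x 1 Hc Rlt_0_1) as [e [He Hy]].
  exists e, (Rabs (phi x) + 1). split; [exact He|]. intros y Hyx.
  specialize (Hy y Hyx). pose proof (Rabs_triang_inv (phi y) (phi x)). lra.
Qed.

Lemma continuity_pt_locally_nonzero (phi : R -> R) (x : R) :
  continuity_pt phi x -> phi x <> 0 ->
  exists e, 0 < e /\ forall y, Rabs (y - x) < e -> phi y <> 0.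
Proof.
  intros Hc Hx. destruct (continuity_pt_eps_delta phi x (Rabs (phi x)) Hc) as [e [He Hy]].
  { apply Rabs_pos_lt, Hx. }
  exists e. split; [exact He|]. intros y Hyx Hy0.
  specialize (Hy y Hyx). rewrite Hy0, Rminus_0_l, Rabs_Ropp in Hy. lra.
Qed.

Lemma continuity_pt_ge_one_side (phi : R -> R) (x s e c : R) :
  continuity_pt phi x -> s <> 0 -> 0 < e ->
  (forall u, 0 < u < e -> c <= phi (x + s * u)) -> c <= phi x.
Proof.
  intros Hc Hs He Hge. apply Rnot_lt_le. intros Hlt.
  destruct (continuity_pt_eps_delta phi x (c - phi x) Hc) as [d [Hd Hy]]; [lra|].
  assert (Has : 0 < Rabs s) by (apply Rabs_pos_lt, Hs).
  set (u := Rmin (e / 2) (d / (2 * Rabs s))).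
  assert (Hu : 0 < u < e).
  { unfold u. split; [apply Rmin_pos; apply Rdiv_lt_0_compat; lra|].
    pose proof (Rmin_l (e / 2) (d / (2 * Rabs s))). lra. }
  assert (Hsu : Rabs (x + s * u - x) < d).
  { replace (x + s * u - x) with (s * u) by ring.
    rewrite Rabs_mult, (Rabs_pos_eq u) by lra.
    assert (Hud : u * (2 * Rabs s) <= d).
    { apply (Rmult_le_reg_r (/ (2 * Rabs s))); [apply Rinv_0_lt_compat; lra|].
      rewrite Rmult_assoc, Rinv_r, Rmult_1_r by lra. apply Rmin_r. }
    nra. }
  specialize (Hy _ Hsu). specialize (Hge u Hu).
  apply Rabs_def2 in Hy. lra.
Qed.

Lemma continuity_pt_eq_one_side (phi : R -> R) (x s e c : R) :
  continuity_pt phi x -> s <> 0 -> 0 < e ->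
  (forall u, 0 < u < e -> phi (x + s * u) = c) -> phi x = c.
Proof.
  intros Hc Hs He Heq. apply Rle_antisym.
  - apply Ropp_le_cancel.
    apply (continuity_pt_ge_one_side (fun y => - phi y) x s e); auto.
    + apply continuity_pt_opp, Hc.
    + intros u Hu. rewrite Heq by exact Hu. lra.
  - apply (continuity_pt_ge_one_side phi x s e); auto.
    intros u Hu. rewrite Heq by exact Hu. lra.
Qed.

Lemma Rabs_increment_le (phi dphi : R -> R) (a b B : R) :
  (forall c, Rmin a b <= c <= Rmax a b -> is_derive phi c (dphi c) /\ Rabs (dphi c) <= B) ->
  Rabs (phi b - phi a) <= B * Rabs (b - a).
Proof.
  intros Hd. destruct (MVT_abs phi dphi a b) as [c [Hc Hin]].
  { intros c Hc. apply is_derive_Reals, Hd, Hc. }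
  rewrite Hc. apply Rmult_le_compat_r; [apply Rabs_pos|]. apply Hd, Hin.
Qed.

(** * Real induction *)

Lemma real_induction (a b : R) (P : R -> Prop) :
  P a ->
  (forall x, a < x <= b -> (forall y, a <= y < x -> P y) -> P x) ->
  (forall x, a <= x <= b -> P x -> exists e, 0 < e /\ forall y, Rabs (y - x) < e -> P y) ->
  forall x, a <= x <= b -> P x.
Proof.
  intros Ha Hclosed Hopen.
  set (E := fun x => a <= x <= b /\ forall y, a <= y <= x -> P y).
  intros x Hx.
  assert (HEa : E a).
  { split; [lra|]. intros y Hy. replace y with a by lra. exact Ha. }
  destruct (completeness E) as [T [Hub Hlub]].
  { exists b. intros w Hw. apply Hw. }
  { exists a. exact HEa. }
  assert (HaT : a <= T) by (apply Hub, HEa).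
  assert (HTb : T <= b) by (apply Hlub; intros w Hw; apply Hw).
  assert (Hbelow : forall y, a <= y < T -> P y).
  { intros y Hy. apply NNPP. intros HnP.
    assert (Hyub : is_upper_bound E y).
    { intros w [_ Hw]. apply Rnot_lt_le. intros Hyw. apply HnP, Hw. lra. }
    specialize (Hlub y Hyub). lra. }
  assert (HT : P T).
  { destruct (Req_dec T a) as [->|HTa]; [exact Ha|]. apply Hclosed; [lra|exact Hbelow]. }
  assert (HTeq : T = b).
  { apply Rle_antisym; [exact HTb|]. apply Rnot_lt_le. intros HTlt.
    destruct (Hopen T ltac:(lra) HT) as [e [He HPe]].
    set (w := Rmin b (T + e / 2)).
    assert (Hw : T < w <= b).
    { unfold w. split; [apply Rmin_glb_lt; lra|apply Rmin_l]. }
    assert (HEw : E w).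
    { split; [lra|]. intros y Hy. destruct (Rlt_le_dec y T) as [HyT|HTy]; [apply Hbelow; lra|].
      apply HPe. assert (w <= T + e / 2) by apply Rmin_r. apply Rabs_def1; lra. }
    specialize (Hub w HEw). lra. }
  destruct (Rlt_le_dec x T) as [HxT|HTx]; [apply Hbelow; lra|].
  replace x with T by lra. exact HT.
Qed.

Lemma locally_bounded_on_segment (phi : R -> R) (Q : R -> Prop) (lo hi : R) :
  (forall x, lo <= x <= hi ->
     exists e K, 0 < e /\ forall y, Rabs (y - x) < e -> Q y -> Rabs (phi y) <= K) ->
  exists K, forall x, lo <= x <= hi -> Q x -> Rabs (phi x) <= K.
Proof.
  intros Hloc. destruct (Rle_lt_dec lo hi) as [Hlh|Hhl]; [|exists 0; intros x Hx; lra].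
  set (P := fun x => exists K, forall y, lo <= y <= x -> Q y -> Rabs (phi y) <= K).
  assert (Hhi : P hi); [|destruct Hhi as [K HK]; exists K; exact HK].
  apply (real_induction lo hi P); [| | |lra].
  - destruct (Hloc lo) as [e [K [He HK]]]; [lra|]. exists K. intros y Hy.
    apply HK. replace (y - lo) with 0 by lra. rewrite Rabs_R0. exact He.
  - intros x Hx Hbelow. destruct (Hloc x) as [e [K1 [He HK1]]]; [lra|].
    destruct (Hbelow (Rmax lo (x - e / 2))) as [K0 HK0].
    { split; [apply Rmax_l|]. apply Rmax_lub_lt; lra. }
    exists (Rmax K0 K1). intros y Hy HQ.
    destruct (Rle_lt_dec y (Rmax lo (x - e / 2))) as [Hyle|Hygt].
    + apply Rle_trans with K0; [apply HK0; [lra|exact HQ]|apply Rmax_l].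
    + apply Rle_trans with K1; [|apply Rmax_r]. apply HK1; [|exact HQ].
      pose proof (Rmax_r lo (x - e / 2)). apply Rabs_def1; lra.
  - intros x Hx [K0 HK0]. destruct (Hloc x Hx) as [e [K1 [He HK1]]].
    exists e. split; [exact He|]. intros y' Hy'. exists (Rmax K0 K1). intros y Hy HQ.
    destruct (Rle_lt_dec y x) as [Hyx|Hxy].
    + apply Rle_trans with K0; [apply HK0; [lra|exact HQ]|apply Rmax_l].
    + apply Rle_trans with K1; [|apply Rmax_r]. apply HK1; [|exact HQ].
      apply Rabs_def2 in Hy'. apply Rabs_def1; lra.
Qed.

Definition between (a b x : R) : Prop := Rmin a b <= x <= Rmax a b.

Ltac solve_between :=
  unfold between, Rmin, Rmax in *; repeat destruct Rle_dec; lra.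

Lemma between_Rabs_le (t s v : R) : between t s v -> Rabs (v - t) <= Rabs (s - t).
Proof.
  unfold between. rewrite Rmin_comm, Rmax_comm. apply Rabs_le_between_min_max.
Qed.

Lemma segment_induction (t s : R) (P : R -> Prop) :
  P t ->
  (forall x, between t s x -> x <> t -> (forall y, between t x y -> y <> x -> P y) -> P x) ->
  (forall x, between t s x -> P x -> exists e, 0 < e /\ forall y, Rabs (y - x) < e -> P y) ->
  forall x, between t s x -> P x.
Proof.
  intros Ht Hclosed Hopen x Hx.
  destruct (Rle_lt_dec t s) as [Hts|Hst].
  - apply (real_induction t s P Ht); [| |solve_between].
    + intros w Hw Hbelow. apply Hclosed; [solve_between|lra|].
      intros y Hy Hyw. apply Hbelow. solve_between.
    + intros w Hw. apply Hopen. solve_between.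
  - replace x with (- - x) by ring.
    apply (real_induction (- t) (- s) (fun y => P (- y))); [rewrite Ropp_involutive; exact Ht| | |solve_between].
    + intros w Hw Hbelow. apply Hclosed; [solve_between|lra|].
      intros y Hy Hyw. rewrite <- (Ropp_involutive y). apply Hbelow. solve_between.
    + intros w Hw Hw'. destruct (Hopen (- w)) as [e [He Hy]]; [solve_between|exact Hw'|].
      exists e. split; [exact He|]. intros y Hyw. apply Hy.
      replace (- y - - w) with (- (y - w)) by ring. rewrite Rabs_Ropp. exact Hyw.
Qed.

(** * A Riccati comparison *)

Lemma sqrt_1_plus_sqr_bounds (v : R) :
  1 <= sqrt (1 + v ^ 2) /\ Rabs v <= sqrt (1 + v ^ 2) /\ sqrt (1 + v ^ 2) <= 1 + Rabs v /\
  sqrt (1 + v ^ 2) * sqrt (1 + v ^ 2) = 1 + v ^ 2.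
Proof.
  assert (Hv2 : Rabs v * Rabs v = v ^ 2) by (rewrite <- Rabs_mult, Rabs_pos_eq; nra).
  assert (Hs : sqrt (1 + v ^ 2) * sqrt (1 + v ^ 2) = 1 + v ^ 2) by (apply sqrt_sqrt; nra).
  pose proof (sqrt_pos (1 + v ^ 2)). pose proof (Rabs_pos v).
  repeat split; nra.
Qed.

Lemma inv_sqrt_1_plus_sqr_derive (u : R -> R) (t du : R) :
  is_derive u t du ->
  is_derive (fun s => / sqrt (1 + u s ^ 2)) t
    (- (u t * du) / ((1 + u t ^ 2) * sqrt (1 + u t ^ 2))).
Proof.
  intros Hu. destruct (sqrt_1_plus_sqr_bounds (u t)) as [Hs1 [_ [_ Hss]]].
  assert (Hpos : 0 < 1 + u t * (u t * 1)) by (pose proof (pow2_ge_0 (u t)); simpl in *; lra).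
  auto_derive; change (u t * (u t * 1)) with (u t ^ 2) in *.
  - repeat split; [exists du; exact Hu|lra|lra].
  - replace (Derive (fun x => u x) t) with du by (symmetry; apply is_derive_unique, Hu).
    rewrite Hss. field. lra.
Qed.

Lemma inv_sqrt_1_plus_sqr_derive_bound (v dv L : R) :
  Rabs dv <= L * (1 + Rabs v) ^ 2 ->
  Rabs (- (v * dv) / ((1 + v ^ 2) * sqrt (1 + v ^ 2))) <= 2 * L.
Proof.
  intros Hdv. destruct (sqrt_1_plus_sqr_bounds v) as [Hs1 [Hsv [_ Hss]]].
  set (S := sqrt (1 + v ^ 2)) in *.
  assert (Hsq : (1 + Rabs v) ^ 2 <= 2 * (S * S)).
  { rewrite Hss. assert (Rabs v * Rabs v = v ^ 2) by (rewrite <- Rabs_mult, Rabs_pos_eq; nra).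
    pose proof (pow2_ge_0 (1 - Rabs v)). simpl in *. nra. }
  rewrite <- Hss. unfold Rdiv.
  assert (HS3 : 0 < S * S * S) by (apply Rmult_lt_0_compat; nra).
  rewrite Rabs_mult, Rabs_Ropp, Rabs_mult, Rabs_inv, (Rabs_pos_eq (S * S * S)) by lra.
  apply (Rmult_le_reg_r (S * S * S)); [exact HS3|].
  rewrite Rmult_assoc, Rinv_l, Rmult_1_r by lra.
  pose proof (Rabs_pos v). pose proof (Rabs_pos dv).
  apply Rle_trans with (S * (L * (2 * (S * S)))); [|right; ring].
  apply Rmult_le_compat; nra.
Qed.

Lemma ln_sqr_derive (g : R -> R) (t dg : R) :
  is_derive g t dg -> g t <> 0 -> is_derive (fun s => ln (g s ^ 2)) t (2 * (dg / g t)).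
Proof.
  intros Hg Hgt. assert (Hpos : 0 < g t * (g t * 1)) by (rewrite Rmult_1_r; nra).
  auto_derive.
  - split; [exists dg; exact Hg|split; [exact Hpos|exact I]].
  - replace (Derive (fun x => g x) t) with dg by (symmetry; apply is_derive_unique, Hg).
    field. exact Hgt.
Qed.

Section Riccati.

Variables (g g1 g2 : R -> R) (L : R).
Hypothesis HL : 0 < L.
Hypothesis Hg : forall t, is_derive g t (g1 t).
Hypothesis Hg1 : forall t, is_derive g1 t (g2 t).
Hypothesis Hcurv : forall t, g t <> 0 ->
  Rabs (g2 t * g t - g1 t ^ 2) <= L * (Rabs (g t) + Rabs (g1 t)) ^ 2.

Let h (t : R) := g1 t / g t.

Lemma h_derive (t : R) : g t <> 0 -> is_derive h t ((g2 t * g t - g1 t ^ 2) / g t ^ 2).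
Proof.
  intros Hgt. unfold h. auto_derive.
  - repeat split; [exists (g2 t); apply Hg1|exists (g1 t); apply Hg|exact Hgt].
  - replace (Derive (fun x => g x) t) with (g1 t) by (symmetry; apply is_derive_unique, Hg).
    replace (Derive (fun x => g1 x) t) with (g2 t) by (symmetry; apply is_derive_unique, Hg1).
    field. exact Hgt.
Qed.

Lemma h_derive_bound (t : R) : g t <> 0 ->
  Rabs ((g2 t * g t - g1 t ^ 2) / g t ^ 2) <= L * (1 + Rabs (h t)) ^ 2.
Proof.
  intros Hgt. unfold h.
  assert (Hg2 : 0 < Rabs (g t) ^ 2) by (apply pow_lt, Rabs_pos_lt, Hgt).
  assert (Hg2' : g t ^ 2 <> 0) by (apply pow_nonzero, Hgt).
  rewrite (Rabs_div _ _ Hg2'), (Rabs_div _ _ Hgt), <- RPow_abs.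
  apply (Rmult_le_reg_r (Rabs (g t) ^ 2)); [exact Hg2|].
  replace (L * (1 + Rabs (g1 t) / Rabs (g t)) ^ 2 * Rabs (g t) ^ 2)
    with (L * (Rabs (g t) + Rabs (g1 t)) ^ 2) by (field; apply Rabs_no_R0, Hgt).
  unfold Rdiv. rewrite Rmult_assoc, Rinv_l, Rmult_1_r by lra. apply Hcurv, Hgt.
Qed.

Lemma h_doubling (t w : R) :
  (forall v, between t w v -> g v <> 0) ->
  Rabs (w - t) * (4 * L * (1 + Rabs (h t))) <= 1 ->
  Rabs (h w) <= 2 * (1 + Rabs (h t)).
Proof.
  intros Hnz Hrad.
  set (dh := fun c => (g2 c * g c - g1 c ^ 2) / g c ^ 2).
  assert (Hlip : Rabs (/ sqrt (1 + h w ^ 2) - / sqrt (1 + h t ^ 2)) <= 2 * L * Rabs (w - t)).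
  { apply (Rabs_increment_le (fun c => / sqrt (1 + h c ^ 2))
      (fun c => - (h c * dh c) / ((1 + h c ^ 2) * sqrt (1 + h c ^ 2)))).
    intros c Hc. split.
    - apply inv_sqrt_1_plus_sqr_derive, h_derive, Hnz, Hc.
    - apply inv_sqrt_1_plus_sqr_derive_bound, h_derive_bound, Hnz, Hc. }
  destruct (sqrt_1_plus_sqr_bounds (h t)) as [Ht1 [_ [Htmu _]]].
  destruct (sqrt_1_plus_sqr_bounds (h w)) as [Hw1 [Hwh [_ _]]].
  set (mu := 1 + Rabs (h t)) in *.
  set (St := sqrt (1 + h t ^ 2)) in *. set (Sw := sqrt (1 + h w ^ 2)) in *.
  assert (HPt : / St * St = 1) by (apply Rinv_l; lra).
  assert (HPw : / Sw * Sw = 1) by (apply Rinv_l; lra).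
  assert (HPt_mu : 1 <= / St * mu) by nra.
  apply Rabs_le_between in Hlip.
  assert (Hhalf : 1 <= 2 * mu * / Sw) by nra.
  nra.
Qed.

Lemma ln_sqr_lower_bound (t w B : R) :
  (forall v, between t w v -> g v <> 0 /\ Rabs (h v) <= B) ->
  ln (g t ^ 2) - 2 * B * Rabs (w - t) <= ln (g w ^ 2).
Proof.
  intros Hv.
  assert (Hinc : Rabs (ln (g w ^ 2) - ln (g t ^ 2)) <= 2 * B * Rabs (w - t)).
  { apply (Rabs_increment_le (fun c => ln (g c ^ 2)) (fun c => 2 * h c)). intros c Hc.
    destruct (Hv c Hc) as [Hgc Hhc]. split.
    - apply ln_sqr_derive; [apply Hg|exact Hgc].
    - rewrite Rabs_mult, Rabs_pos_eq by lra. lra. }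
  apply Rabs_le_between in Hinc. lra.
Qed.

Lemma no_root_nearby (t s : R) :
  g t <> 0 -> Rabs (s - t) * (4 * L * (1 + Rabs (h t))) <= 1 ->
  forall x, between t s x -> g x <> 0.
Proof.
  intros Hgt Hrad. set (mu := 1 + Rabs (h t)) in *.
  assert (Hmu : 1 <= mu) by (pose proof (Rabs_pos (h t)); unfold mu; lra).
  set (lam := ln (g t ^ 2) - 2 * (2 * mu) * Rabs (s - t)).
  apply segment_induction; [exact Hgt| |].
  - intros x Hx Hxt Hbelow.
    assert (Hsub : forall y v, between t x y -> y <> x -> between t y v -> g v <> 0).
    { intros y v Hy Hyx Hv. apply Hbelow; [solve_between|].
      intros ->. apply Hyx. solve_between. }
    assert (Hlow : forall y, between t x y -> y <> x -> exp lam <= g y * g y).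
    { intros y Hy Hyx.
      assert (Hyt : Rabs (y - t) <= Rabs (s - t)) by (apply between_Rabs_le; solve_between).
      assert (Hgy : forall v, between t y v -> g v <> 0 /\ Rabs (h v) <= 2 * mu).
      { intros v Hv. split; [exact (Hsub y v Hy Hyx Hv)|].
        apply h_doubling.
        - intros v' Hv'. apply (Hsub y v' Hy Hyx). solve_between.
        - apply Rle_trans with (Rabs (s - t) * (4 * L * mu)); [|exact Hrad].
          apply Rmult_le_compat_r; [nra|].
          apply Rle_trans with (Rabs (y - t)); [apply between_Rabs_le; exact Hv|exact Hyt]. }
      pose proof (ln_sqr_lower_bound t y (2 * mu) Hgy) as Hln.
      assert (Hpos : 0 < g y ^ 2).
      { destruct (Hgy y) as [Hgy0 _]; [solve_between|]. simpl. nra. }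
      replace (g y * g y) with (exp (ln (g y ^ 2))) by (rewrite exp_ln by exact Hpos; ring).
      assert (Hle : lam <= ln (g y ^ 2)) by (unfold lam; nra).
      destruct (Rle_lt_or_eq_dec _ _ Hle) as [Hlt|<-]; [left; apply exp_increasing, Hlt|lra]. }
    assert (Hcont : continuity_pt g x) by exact (continuity_pt_of_ex_derive g x (ex_intro _ _ (Hg x))).
    assert (Hgx : exp lam <= g x * g x).
    { apply (continuity_pt_ge_one_side (fun v => g v * g v) x (t - x) 1);
        [exact (continuity_pt_mult _ _ _ Hcont Hcont)|lra|lra|].
      intros u Hu. apply Hlow.
      - unfold between, Rmin, Rmax in *. repeat destruct Rle_dec; nra.
      - intros Heq. apply Hxt. nra. }
    pose proof (exp_pos lam). intros Hg0. rewrite Hg0 in Hgx. lra.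
  - intros x _ Hgx. apply continuity_pt_locally_nonzero; [|exact Hgx].
    exact (continuity_pt_of_ex_derive g x (ex_intro _ _ (Hg x))).
Qed.

Lemma h_bound_nearby (t s : R) :
  g t <> 0 -> Rabs (s - t) * (4 * L * (1 + Rabs (h t))) <= 1 ->
  g s <> 0 /\ Rabs (h s) <= 2 * (1 + Rabs (h t)).
Proof.
  intros Hgt Hrad.
  pose proof (no_root_nearby t s Hgt Hrad) as Hnz.
  split; [apply Hnz; solve_between|]. apply h_doubling; [exact Hnz|exact Hrad].
Qed.

End Riccati.

(** * Local behaviour of analytic functions *)

Lemma pow_le_pow_of_le_1 (u : R) (m n : nat) : 0 <= u <= 1 -> (m <= n)%nat -> u ^ n <= u ^ m.
Proof.
  intros Hu Hmn. replace n with (m + (n - m))%nat by lia. rewrite pow_add.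
  pose proof (pow_le u m (proj1 Hu)).
  assert (u ^ (n - m) <= 1) by (rewrite <- (pow1 (n - m)); apply pow_incr; lra).
  nra.
Qed.

Definition Hquot (x F D S : R) : R := x ^ 2 * F * S / (F ^ 2 + x ^ 2 * D ^ 2).

Lemma Hquot_le_nonroot (x F D S : R) : F <> 0 -> Rabs (Hquot x F D S) <= Rabs (x ^ 2 * S / F).
Proof.
  intros HF. unfold Hquot.
  assert (HF2 : 0 < F ^ 2) by (simpl; nra).
  assert (Hden : F ^ 2 <= F ^ 2 + x ^ 2 * D ^ 2) by (pose proof (pow2_ge_0 (x * D)); simpl in *; nra).
  replace (x ^ 2 * F * S / (F ^ 2 + x ^ 2 * D ^ 2))
    with (x ^ 2 * S / F * (F ^ 2 / (F ^ 2 + x ^ 2 * D ^ 2))) by (field; lra).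
  rewrite Rabs_mult. rewrite <- (Rmult_1_r (Rabs (x ^ 2 * S / F))) at 2.
  apply Rmult_le_compat_l; [apply Rabs_pos|].
  rewrite Rabs_pos_eq by (apply Rmult_le_pos; [lra|left; apply Rinv_0_lt_compat; lra]).
  apply (Rmult_le_reg_r (F ^ 2 + x ^ 2 * D ^ 2)); [lra|].
  unfold Rdiv. rewrite Rmult_assoc, Rinv_l; lra.
Qed.

(* At a zero of order m of f, this is used with p, q, r = m, m - 1, m - 2. *)
Lemma Hquot_le_root (x w B0 B1 B2 : R) (p q r : nat) :
  x <> 0 -> B1 <> 0 -> Rabs w <= 1 -> (2 * q <= p + r)%nat ->
  Rabs (Hquot x (w ^ p * B0) (w ^ q * B1) (w ^ r * B2)) <= Rabs (B0 * B2 / B1 ^ 2).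
Proof.
  intros Hx HB1 Hw Hpqr. unfold Hquot.
  set (Den := (w ^ p * B0) ^ 2 + x ^ 2 * (w ^ q * B1) ^ 2).
  assert (HB12 : 0 < B1 ^ 2) by (simpl; nra).
  assert (Hx2 : 0 < x ^ 2) by (simpl; nra).
  assert (HDen : x ^ 2 * Rabs w ^ (2 * q) * B1 ^ 2 <= Den).
  { assert (Hwq : Rabs w ^ (2 * q) = (w ^ q) ^ 2).
    { rewrite Nat.mul_comm, pow_mult, RPow_abs. apply pow2_abs. }
    unfold Den. rewrite Hwq. pose proof (pow2_ge_0 (w ^ p * B0)).
    replace ((w ^ q * B1) ^ 2) with ((w ^ q) ^ 2 * B1 ^ 2) by ring. lra. }
  assert (HN : Rabs (x ^ 2 * (w ^ p * B0) * (w ^ r * B2)) <= x ^ 2 * Rabs w ^ (2 * q) * Rabs (B0 * B2)).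
  { replace (x ^ 2 * (w ^ p * B0) * (w ^ r * B2)) with (x ^ 2 * w ^ (p + r) * (B0 * B2))
      by (rewrite pow_add; ring).
    rewrite 2!Rabs_mult, (Rabs_pos_eq (x ^ 2)), <- RPow_abs by lra.
    apply Rmult_le_compat_r; [apply Rabs_pos|]. apply Rmult_le_compat_l; [lra|].
    apply pow_le_pow_of_le_1; [split; [apply Rabs_pos|exact Hw]|exact Hpqr]. }
  assert (HDen0 : 0 <= Den).
  { unfold Den. pose proof (pow2_ge_0 (w ^ p * B0)). pose proof (pow2_ge_0 (w ^ q * B1)). nra. }
  clearbody Den.
  destruct (Req_dec Den 0) as [H0|Hne].
  - unfold Rdiv at 1. rewrite H0, Rinv_0, Rmult_0_r, Rabs_R0. apply Rabs_pos.
  - assert (HDen1 : 0 < Den) by lra.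
    assert (HB12' : B1 ^ 2 <> 0) by (apply pow_nonzero, HB1).
    rewrite (Rabs_div _ _ Hne), (Rabs_div _ _ HB12'), (Rabs_pos_eq Den), (Rabs_pos_eq (B1 ^ 2)) by lra.
    set (N := x ^ 2 * (w ^ p * B0) * (w ^ r * B2)) in *.
    apply (Rmult_le_reg_r (Den * B1 ^ 2)); [nra|].
    replace (Rabs (B0 * B2) / B1 ^ 2 * (Den * B1 ^ 2)) with (Rabs (B0 * B2) * Den) by (field; auto).
    replace (Rabs N / Den * (Den * B1 ^ 2)) with (Rabs N * B1 ^ 2) by (field; auto).
    pose proof (Rabs_pos (B0 * B2)).
    apply Rle_trans with (x ^ 2 * Rabs w ^ (2 * q) * Rabs (B0 * B2) * B1 ^ 2); [nra|nra].
Qed.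

Lemma CV_radius_decr_n (a : nat -> R) (n : nat) : CV_radius (PS_decr_n a n) = CV_radius a.
Proof.
  induction n as [|n IH].
  - apply CV_radius_ext. reflexivity.
  - rewrite <- IH, <- (CV_radius_decr_1 (PS_decr_n a n)).
    apply CV_radius_ext. intros k. unfold PS_decr_n, PS_decr_1. f_equal. lia.
Qed.

Lemma CV_radius_gt_of_ex_pseries (a : nat -> R) (r : R) :
  (forall y, Rabs y < r -> ex_pseries a y) ->
  forall y, Rabs y < r -> Rbar_lt (Rabs y) (CV_radius a).
Proof.
  intros Hex y Hy.
  set (y' := (Rabs y + r) / 2).
  assert (Hyy' : Rabs y < y') by (unfold y'; lra).
  assert (Hy'r : Rabs y' < r) by (pose proof (Rabs_pos y); rewrite Rabs_pos_eq; unfold y'; lra).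
  apply (Rbar_lt_le_trans _ y'); [exact Hyy'|].
  apply (CV_radius_bounded a).
  pose proof (ex_series_lim_0 _ (Hex y' Hy'r)) as Hlim.
  apply is_lim_seq_Reals, cv_cvabs in Hlim. rewrite Rabs_R0 in Hlim.
  destruct (cauchy_bound _ (CV_Cauchy _ (exist _ 0 Hlim))) as [M HM].
  exists M. intros n. apply HM. exists n. simpl. unfold scal; simpl. unfold mult; simpl.
  rewrite Rmult_comm. reflexivity.
Qed.

Lemma PSeries_coef_zero_of_zero_one_side (a : nat -> R) (s e : R) :
  s <> 0 -> 0 < e -> Rbar_lt 0 (CV_radius a) ->
  (forall u, 0 < u < e -> PSeries a (s * u) = 0) -> forall n, a n = 0.
Proof.
  intros Hs He Hcv Hzero n. induction n as [n IH] using lt_wf_ind.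
  replace (a n) with (PSeries (PS_decr_n a n) 0) by (rewrite PSeries_0; unfold PS_decr_n; f_equal; lia).
  apply (continuity_pt_eq_one_side _ 0 s e); [|exact Hs|exact He|].
  - apply PSeries_continuity. rewrite Rabs_R0, CV_radius_decr_n. exact Hcv.
  - intros u Hu. rewrite Rplus_0_l.
    assert (Hsu : (s * u) ^ n <> 0) by (apply pow_nonzero, Rmult_integral_contrapositive; split; lra).
    apply (Rmult_eq_reg_l ((s * u) ^ n)); [|exact Hsu].
    rewrite Rmult_0_r, <- PSeries_decr_n_aux by exact IH. apply Hzero, Hu.
Qed.

Lemma PSeries_derive_n_factor (a : nat -> R) (m n : nat) (w : R) :
  (forall k, (k < m)%nat -> a k = 0) ->
  PSeries (PS_derive_n n a) w = w ^ (m - n) * PSeries (PS_decr_n (PS_derive_n n a) (m - n)) w.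
Proof.
  intros Hlow. apply PSeries_decr_n_aux. intros k Hk.
  unfold PS_derive_n. rewrite Hlow by lia. ring.
Qed.

Section LocalExpansion.

Variables (f : R -> R) (a : nat -> R) (z r : R).
Hypothesis Hr : 0 < r.
Hypothesis Hcv : forall y, Rabs y < r -> Rbar_lt (Rabs y) (CV_radius a).
Hypothesis Hrep : forall x, Rabs (x - z) < r -> f x = PSeries a (x - z).

Lemma local_Derive_n (n : nat) (x : R) : Rabs (x - z) < r ->
  ex_derive_n f n x /\ Derive_n f n x = PSeries (PS_derive_n n a) (x - z).
Proof.
  intros Hx.
  assert (Hloc : locally x (fun t => PSeries a (t + - z) = f t)).
  { assert (Hpos : 0 < r - Rabs (x - z)) by lra.
    exists (mkposreal _ Hpos). intros y Hy.
    symmetry. apply Hrep. change (Rabs (y - x) < r - Rabs (x - z)) in Hy.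
    replace (y - z) with ((y - x) + (x - z)) by ring.
    pose proof (Rabs_triang (y - x) (x - z)). lra. }
  split.
  - apply (ex_derive_n_ext_loc _ _ _ _ Hloc), ex_derive_n_comp_trans, ex_derive_n_PSeries, Hcv, Hx.
  - rewrite <- (Derive_n_ext_loc _ _ _ _ Hloc), Derive_n_comp_trans, Derive_n_PSeries by (apply Hcv, Hx).
    reflexivity.
Qed.

Lemma local_Hfun (x : R) : Rabs (x - z) < r ->
  Hfun f x = Hquot x (PSeries a (x - z)) (PSeries (PS_derive_n 1 a) (x - z))
    (PSeries (PS_derive_n 2 a) (x - z)).
Proof.
  intros Hx. unfold Hfun.
  change (Derive f x) with (Derive_n f 1 x).
  rewrite Hrep, (proj2 (local_Derive_n 1 x Hx)), (proj2 (local_Derive_n 2 x Hx)) by exact Hx.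
  reflexivity.
Qed.

Lemma Hfun_bounded_near_nonroot : a 0%nat <> 0 ->
  exists e K, 0 < e /\ forall x, Rabs (x - z) < e -> f x <> 0 -> Rabs (Hfun f x) <= K.
Proof.
  intros Ha0.
  set (psi := fun w => (z + w) ^ 2 * PSeries (PS_derive_n 2 a) w / PSeries a w).
  assert (Hcv0 : Rbar_lt (Rabs 0) (CV_radius a)) by (apply Hcv; rewrite Rabs_R0; exact Hr).
  assert (Hpsi : continuity_pt psi 0).
  { apply continuity_pt_of_ex_derive. unfold psi. auto_derive. repeat split.
    - apply ex_derive_PSeries. rewrite CV_radius_derive_n. exact Hcv0.
    - apply ex_derive_PSeries, Hcv0.
    - rewrite PSeries_0. exact Ha0. }
  destruct (continuity_pt_locally_bounded psi 0 Hpsi) as [e [K [He HK]]].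
  exists (Rmin e r), K. split; [apply Rmin_pos; assumption|]. intros x Hx Hfx.
  assert (Hxr : Rabs (x - z) < r) by (pose proof (Rmin_r e r); lra).
  assert (Hxe : Rabs (x - z - 0) < e) by (rewrite Rminus_0_r; pose proof (Rmin_l e r); lra).
  rewrite local_Hfun by exact Hxr. rewrite Hrep in Hfx by exact Hxr.
  eapply Rle_trans; [apply Hquot_le_nonroot, Hfx|].
  specialize (HK _ Hxe). unfold psi in HK. replace (z + (x - z)) with x in HK by ring. exact HK.
Qed.

Lemma Hfun_bounded_near_root (m : nat) :
  r <= z -> (0 < m)%nat -> (forall k, (k < m)%nat -> a k = 0) -> a m <> 0 ->
  exists e K, 0 < e /\ forall x, Rabs (x - z) < e -> Rabs (Hfun f x) <= K.
Proof.
  intros Hrz Hm Hlow Ham.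
  set (b0 := PS_decr_n a m).
  set (b1 := PS_decr_n (PS_derive_n 1 a) (m - 1)).
  set (b2 := PS_decr_n (PS_derive_n 2 a) (m - 2)).
  assert (Hcv0 : Rbar_lt (Rabs 0) (CV_radius a)) by (apply Hcv; rewrite Rabs_R0; exact Hr).
  assert (Hb0 : Rbar_lt (Rabs 0) (CV_radius b0)) by (unfold b0; rewrite CV_radius_decr_n; exact Hcv0).
  assert (Hb1 : Rbar_lt (Rabs 0) (CV_radius b1))
    by (unfold b1; rewrite CV_radius_decr_n, CV_radius_derive_n; exact Hcv0).
  assert (Hb2 : Rbar_lt (Rabs 0) (CV_radius b2))
    by (unfold b2; rewrite CV_radius_decr_n, CV_radius_derive_n; exact Hcv0).
  assert (Hlead : PSeries b1 0 <> 0).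
  { rewrite PSeries_0. unfold b1, PS_decr_n, PS_derive_n.
    replace (m - 1 + 0 + 1)%nat with m by lia.
    apply Rmult_integral_contrapositive. split; [|exact Ham].
    apply Rmult_integral_contrapositive. split; [apply not_0_INR, fact_neq_0|].
    apply Rinv_neq_0_compat, not_0_INR, fact_neq_0. }
  set (psi := fun w => PSeries b0 w * PSeries b2 w / PSeries b1 w ^ 2).
  assert (Hpsi : continuity_pt psi 0).
  { apply continuity_pt_of_ex_derive. unfold psi. auto_derive.
    repeat split; try (apply ex_derive_PSeries; assumption).
    rewrite Rmult_1_r. apply Rmult_integral_contrapositive. split; exact Hlead. }
  destruct (continuity_pt_locally_bounded psi 0 Hpsi) as [e1 [K [He1 HK]]].
  destruct (continuity_pt_locally_nonzero (PSeries b1) 0) as [e2 [He2 Hnz]];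
    [apply PSeries_continuity, Hb1|exact Hlead|].
  set (e := Rmin (Rmin e1 e2) (Rmin r 1)).
  assert (He : 0 < e /\ e <= e1 /\ e <= e2 /\ e <= r /\ e <= 1).
  { unfold e, Rmin. repeat destruct Rle_dec; lra. }
  destruct He as [He [He_e1 [He_e2 [He_r He_1]]]].
  exists e, K. split; [exact He|]. intros x Hx.
  rewrite local_Hfun by lra.
  set (w := x - z) in *.
  rewrite (PSeries_decr_n_aux a m w Hlow), !(PSeries_derive_n_factor a m _ w Hlow).
  fold b0 b1 b2.
  eapply Rle_trans; [apply (Hquot_le_root x w _ _ _ m (m - 1) (m - 2))|].
  - apply Rgt_not_eq. apply Rabs_def2 in Hx. unfold w in Hx. lra.
  - apply Hnz. rewrite Rminus_0_r. lra.
  - lra.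
  - lia.
  - apply HK. rewrite Rminus_0_r. lra.
Qed.

End LocalExpansion.

Lemma exists_first_nonzero (a : nat -> R) :
  (exists n, a n <> 0) -> exists m, a m <> 0 /\ forall k, (k < m)%nat -> a k = 0.
Proof.
  intros [n Hn]. induction n as [n IH] using lt_wf_ind.
  destruct (classic (exists k, (k < n)%nat /\ a k <> 0)) as [[k [Hk Hak]]|Hno].
  - exact (IH k Hk Hak).
  - exists n. split; [exact Hn|]. intros k Hk. apply NNPP. intros Hak. apply Hno. exists k. auto.
Qed.

Section Analytic.

Variable f : R -> R.
Hypothesis Hana : real_analytic_on pos_half_line f.

Lemma analytic_local_pseries (z : R) : 0 < z ->
  exists a r, 0 < r /\ r <= z /\ (forall y, Rabs y < r -> Rbar_lt (Rabs y) (CV_radius a)) /\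
    forall x, Rabs (x - z) < r -> f x = PSeries a (x - z).
Proof.
  intros Hz. destruct (Hana z Hz) as [a [r [Hr Hser]]].
  exists a, r. repeat split.
  - exact Hr.
  - apply Rnot_lt_le. intros Hzr. destruct (Hser 0) as [H0 _].
    + rewrite Rminus_0_l, Rabs_Ropp, Rabs_pos_eq; lra.
    + unfold pos_half_line in H0. lra.
  - apply CV_radius_gt_of_ex_pseries. intros y Hy.
    assert (Hyz : Rabs (y + z - z) < r) by (replace (y + z - z) with y by ring; exact Hy).
    destruct (Hser _ Hyz) as [_ Hs]. replace (y + z - z) with y in Hs by ring.
    exists (f (y + z)). exact Hs.
  - intros x Hx. symmetry. apply is_pseries_unique, Hser, Hx.
Qed.

Lemma analytic_derivatives (x : R) : 0 < x ->
  is_derive f x (Derive f x) /\ is_derive (Derive f) x (Derive_n f 2 x).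
Proof.
  intros Hx. destruct (analytic_local_pseries x Hx) as [a [r [Hr [_ [Hcv Hrep]]]]].
  assert (Hxx : Rabs (x - x) < r) by (rewrite Rminus_eq_0, Rabs_R0; exact Hr).
  split; apply Derive_correct.
  - exact (proj1 (local_Derive_n f a x r Hcv Hrep 1 x Hxx)).
  - exact (proj1 (local_Derive_n f a x r Hcv Hrep 2 x Hxx)).
Qed.

Lemma analytic_locally_zero_of_one_side (T s e : R) :
  0 < T -> s <> 0 -> 0 < e -> (forall u, 0 < u < e -> f (T + s * u) = 0) ->
  locally T (fun y => f y = 0).
Proof.
  intros HT Hs He Hzero.
  destruct (analytic_local_pseries T HT) as [b [rho [Hrho [_ [Hcv Hrep]]]]].
  assert (Has : 0 < Rabs s) by (apply Rabs_pos_lt, Hs).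
  assert (Hb : forall n, b n = 0).
  { apply (PSeries_coef_zero_of_zero_one_side b s (Rmin e (rho / Rabs s))); [exact Hs| | |].
    - apply Rmin_pos; [exact He|apply Rdiv_lt_0_compat; assumption].
    - rewrite <- Rabs_R0. apply Hcv. rewrite Rabs_R0. exact Hrho.
    - intros u Hu.
      assert (Hsu : Rabs (s * u) < rho).
      { assert (Hu' : u < rho / Rabs s) by (pose proof (Rmin_r e (rho / Rabs s)); lra).
        apply (Rmult_lt_compat_l (Rabs s)) in Hu'; [|exact Has].
        replace (Rabs s * (rho / Rabs s)) with rho in Hu' by (field; lra).
        rewrite Rabs_mult, (Rabs_pos_eq u) by lra. exact Hu'. }
      specialize (Hrep (T + s * u)). replace (T + s * u - T) with (s * u) in Hrep by ring.
      rewrite <- Hrep by exact Hsu. apply Hzero. pose proof (Rmin_l e (rho / Rabs s)). lra. }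
  exists (mkposreal rho Hrho). intros y Hy. rewrite Hrep by exact Hy.
  rewrite <- (PSeries_const_0 (y - T)). apply PSeries_ext, Hb.
Qed.

Hypothesis Hnz : exists x, 0 < x /\ f x <> 0.

Lemma analytic_not_locally_zero (z : R) : 0 < z -> ~ locally z (fun y => f y = 0).
Proof.
  intros Hz Hloc. destruct Hnz as [x0 [Hx0 Hfx0]]. apply Hfx0.
  assert (Hpos : forall x, between z x0 x -> 0 < x) by (intros x Hx; solve_between).
  apply (locally_singleton _ (fun y => f y = 0)).
  apply (segment_induction z x0 (fun x => locally x (fun y => f y = 0)));
    [exact Hloc| | |solve_between].
  - intros x Hx Hxz Hbelow.
    apply (analytic_locally_zero_of_one_side x (z - x) 1); [apply Hpos, Hx| |lra|].
    + intros Heq. apply Hxz. lra.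
    + intros u Hu. apply (locally_singleton _ (fun y => f y = 0)), Hbelow.
      * unfold between, Rmin, Rmax in *. repeat destruct Rle_dec; nra.
      * intros Heq. apply Hxz. nra.
  - intros x _ Hx. destruct (locally_locally _ _ Hx) as [e He].
    exists e. split; [apply cond_pos|]. intros y Hy. apply He, Hy.
Qed.

Lemma analytic_pseries_coef_nonzero (a : nat -> R) (z r : R) :
  0 < z -> 0 < r -> (forall x, Rabs (x - z) < r -> f x = PSeries a (x - z)) ->
  exists n, a n <> 0.
Proof.
  intros Hz Hr Hrep. apply NNPP. intros Hno. apply (analytic_not_locally_zero z Hz).
  exists (mkposreal r Hr). intros y Hy. rewrite Hrep by exact Hy.
  rewrite <- (PSeries_const_0 (y - z)). apply PSeries_ext. intros n.
  apply NNPP. intros Hn. apply Hno. exists n. exact Hn.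
Qed.

Lemma Hfun_locally_bounded (z : R) : 0 < z ->
  exists e K, 0 < e /\ forall x, Rabs (x - z) < e -> f x <> 0 -> Rabs (Hfun f x) <= K.
Proof.
  intros Hz. destruct (analytic_local_pseries z Hz) as [a [r [Hr [Hrz [Hcv Hrep]]]]].
  destruct (exists_first_nonzero a (analytic_pseries_coef_nonzero a z r Hz Hr Hrep))
    as [[|m] [Ham Hlow]].
  - exact (Hfun_bounded_near_nonroot f a z r Hr Hcv Hrep Ham).
  - destruct (Hfun_bounded_near_root f a z r Hr Hcv Hrep (S m) Hrz ltac:(lia) Hlow Ham)
      as [e [K [He HK]]].
    exists e, K. split; [exact He|]. intros x Hx _. apply HK, Hx.
Qed.

Lemma Hfun_bounded (K0 : R) :
  (exists delta, 0 < delta /\ forall x, 0 < x < delta -> f x <> 0 -> Rabs (Hfun f x) <= K0) ->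
  (exists M, forall x, M < x -> f x <> 0 -> Rabs (Hfun f x) <= K0) ->
  exists K, 0 <= K /\ forall x, 0 < x -> f x <> 0 -> Rabs (Hfun f x) <= K.
Proof.
  intros [delta [Hdelta Hnear0]] [M Hnearinf].
  destruct (locally_bounded_on_segment (Hfun f) (fun x => f x <> 0) delta M) as [K1 HK1].
  { intros x Hx. apply Hfun_locally_bounded. lra. }
  exists (Rmax 0 (Rmax K0 K1)). split; [apply Rmax_l|]. intros x Hx Hfx.
  apply Rle_trans with (Rmax K0 K1); [|apply Rmax_r].
  destruct (Rlt_le_dec x delta) as [Hxd|Hdx]; [apply Rle_trans with K0; [now apply Hnear0|apply Rmax_l]|].
  destruct (Rlt_le_dec M x) as [HMx|HxM]; [apply Rle_trans with K0; [now apply Hnearinf|apply Rmax_l]|].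
  apply Rle_trans with K1; [now apply HK1|apply Rmax_r].
Qed.

End Analytic.

(** * Amenability *)

Lemma curvature_le_of_Hquot_le (x F D S K : R) :
  0 <= K -> F <> 0 -> Rabs (Hquot x F D S) <= K ->
  Rabs ((x * D + x ^ 2 * S) * F - (x * D) ^ 2) <= (K + 2) * (Rabs F + Rabs (x * D)) ^ 2.
Proof.
  intros HK HF HH. unfold Hquot in HH.
  set (a := Rabs F). set (b := Rabs (x * D)).
  assert (Ha : 0 <= a) by apply Rabs_pos. assert (Hb : 0 <= b) by apply Rabs_pos.
  assert (Ea : F ^ 2 = a * a) by (unfold a; rewrite <- Rabs_mult, Rabs_pos_eq; [ring|nra]).
  assert (Eb : x ^ 2 * D ^ 2 = b * b) by (unfold b; rewrite <- Rabs_mult, Rabs_pos_eq; [ring|nra]).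
  assert (Hden : 0 < F ^ 2 + x ^ 2 * D ^ 2) by (assert (0 < a) by (apply Rabs_pos_lt, HF); nra).
  assert (HN : Rabs (x ^ 2 * F * S) <= K * (a * a + b * b)).
  { rewrite <- Ea, <- Eb.
    rewrite Rabs_div, (Rabs_pos_eq (F ^ 2 + x ^ 2 * D ^ 2)) in HH by lra.
    apply (Rmult_le_compat_r (F ^ 2 + x ^ 2 * D ^ 2)) in HH; [|lra].
    unfold Rdiv in HH. rewrite Rmult_assoc, Rinv_l, Rmult_1_r in HH by lra. exact HH. }
  replace ((x * D + x ^ 2 * S) * F - (x * D) ^ 2)
    with ((x * D) * F + x ^ 2 * F * S - (x * D) ^ 2) by ring.
  assert (Hsum : Rabs ((x * D) * F + x ^ 2 * F * S - (x * D) ^ 2)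
                 <= b * a + Rabs (x ^ 2 * F * S) + b * b).
  { unfold Rminus. eapply Rle_trans; [apply Rabs_triang|]. rewrite Rabs_Ropp.
    replace (Rabs ((x * D) ^ 2)) with (b * b) by (unfold b; rewrite <- RPow_abs; ring).
    pose proof (Rabs_triang (x * D * F) (x ^ 2 * F * S)) as Htri.
    rewrite Rabs_mult in Htri. fold a b in Htri. lra. }
  pose proof (Rmult_le_pos K (a * b) HK (Rmult_le_pos a b Ha Hb)). nra.
Qed.

Lemma exp_coordinates_derive (f : R -> R) (t : R) :
  (forall x, 0 < x -> is_derive f x (Derive f x) /\ is_derive (Derive f) x (Derive_n f 2 x)) ->
  is_derive (fun s => f (exp s)) t (exp t * Derive f (exp t)) /\
  is_derive (fun s => exp s * Derive f (exp s)) t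
    (exp t * Derive f (exp t) + exp t ^ 2 * Derive_n f 2 (exp t)).
Proof.
  intros Hder. destruct (Hder (exp t) (exp_pos t)) as [Hf Hf'].
  split.
  - exact (is_derive_comp f exp t _ _ Hf (is_derive_exp t)).
  - pose proof (is_derive_comp (Derive f) exp t _ _ Hf' (is_derive_exp t)) as Hc.
    replace (exp t * Derive f (exp t) + exp t ^ 2 * Derive_n f 2 (exp t))
      with (plus (mult (exp t) (Derive f (exp t))) (mult (exp t) (scal (exp t) (Derive_n f 2 (exp t)))))
      by (unfold plus, mult, scal; simpl; unfold mult; simpl; ring).
    apply (is_derive_mult exp (fun s => Derive f (exp s))); [apply is_derive_exp|exact Hc|].
    intros; apply Rmult_comm.
Qed.

Lemma kappa_finite_nonroot (f : R -> R) (x : R) : 0 < x -> is_finite (kappa f x) -> f x <> 0.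
Proof.
  intros Hx Hfin Hf0. unfold kappa in Hfin.
  destruct (Req_EM_T x 0); [lra|]. destruct (Req_EM_T (f x) 0); [discriminate|contradiction].
Qed.

Lemma mu_nonroot (f : R -> R) (x : R) :
  0 < x -> f x <> 0 -> mu f x = Finite (1 + Rabs (x * Derive f x / f x)).
Proof.
  intros Hx Hfx. unfold mu, kappa.
  destruct (Req_EM_T x 0); [lra|]. destruct (Req_EM_T (f x) 0); [contradiction|].
  rewrite Rabs_div, Rabs_mult by exact Hfx. reflexivity.
Qed.

Lemma reldist_lt_ln (x y r : R) :
  0 < x -> Rbar_lt (reldist y x) (Finite r) -> 0 < y /\ Rabs (ln y - ln x) < r.
Proof.
  intros Hx Hy. unfold reldist in Hy.
  destruct (Req_EM_T y 0) as [Hy0|Hy0].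
  - destruct (Req_EM_T x 0); [lra|contradiction].
  - destruct (Rlt_dec 0 (y * x)) as [Hyx|Hyx]; [|contradiction].
    assert (Hyp : 0 < y) by nra. split; [exact Hyp|].
    simpl in Hy. rewrite ln_div in Hy by lra. rewrite Rabs_minus_sym. exact Hy.
Qed.

Lemma amenable_of_Hfun_bounded (f : R -> R) (K : R) :
  (forall x, 0 < x -> is_derive f x (Derive f x) /\ is_derive (Derive f) x (Derive_n f 2 x)) ->
  0 <= K -> (forall x, 0 < x -> f x <> 0 -> Rabs (Hfun f x) <= K) ->
  amenable pos_half_line f.
Proof.
  intros Hder HK0 HK.
  set (g := fun t => f (exp t)).
  set (g1 := fun t => exp t * Derive f (exp t)).
  set (g2 := fun t => exp t * Derive f (exp t) + exp t ^ 2 * Derive_n f 2 (exp t)).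
  set (L := K + 2).
  assert (HL : 0 < L) by (unfold L; lra).
  assert (Hg : forall t, is_derive g t (g1 t)) by (intros t; apply exp_coordinates_derive, Hder).
  assert (Hg1 : forall t, is_derive g1 t (g2 t)) by (intros t; apply exp_coordinates_derive, Hder).
  assert (Hcurv : forall t, g t <> 0 ->
    Rabs (g2 t * g t - g1 t ^ 2) <= L * (Rabs (g t) + Rabs (g1 t)) ^ 2).
  { intros t Hgt. apply curvature_le_of_Hquot_le; [exact HK0|exact Hgt|].
    apply HK; [apply exp_pos|exact Hgt]. }
  assert (Hh : forall x, 0 < x -> g1 (ln x) / g (ln x) = x * Derive f x / f x).
  { intros x Hx. unfold g, g1. rewrite exp_ln by exact Hx. reflexivity. }
  exists (4 * L + 3). split; [lra|]. intros x Hx Hfin.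
  unfold pos_half_line in Hx.
  assert (Hfx : f x <> 0) by exact (kappa_finite_nonroot f x Hx Hfin).
  rewrite (mu_nonroot f x Hx Hfx). simpl real.
  set (mux := 1 + Rabs (x * Derive f x / f x)).
  assert (Hmux : 1 <= mux) by (pose proof (Rabs_pos (x * Derive f x / f x)); unfold mux; lra).
  split; intros y Hy; destruct (reldist_lt_ln x y _ Hx Hy) as [Hyp Hyx]; [exact Hyp|].
  destruct (h_bound_nearby g g1 g2 L HL Hg Hg1 Hcurv (ln x) (ln y)) as [Hgy Hhy].
  - unfold g. rewrite exp_ln by exact Hx. exact Hfx.
  - rewrite Hh by exact Hx. fold mux.
    apply (Rmult_lt_compat_r ((4 * L + 3) * mux)) in Hyx; [|nra].
    rewrite Rinv_l in Hyx by nra. nra.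
  - unfold g in Hgy. rewrite exp_ln in Hgy by exact Hyp.
    rewrite Hh, Hh in Hhy by assumption. fold mux in Hhy.
    rewrite (mu_nonroot f y Hyp Hgy). simpl. nra.
Qed.

Theorem proposition4 (f : R -> R)
  (Hana : real_analytic_on pos_half_line f)
  (Hnz : exists x, 0 < x /\ f x <> 0)
  (H1 : forall xs : nat -> R,
      (forall j, 0 < xs j) ->
      (is_lim_seq xs (Finite 0) \/ is_lim_seq xs p_infty) ->
      Rbar_seq_cv (fun j => reldist_set (xs j) (fun s => 0 < s /\ f s = 0)) (Finite 0) ->
      Rbar_seq_cv (fun j => kappa f (xs j)) p_infty)
  (H2 : exists C : R, 0 < C /\
      (* limsup_{x -> 0+} |H(f,x)| <= C *)
      (forall eps, 0 < eps -> exists delta, 0 < delta /\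
         forall x, 0 < x < delta ->
           f x ^ 2 + x ^ 2 * (Derive f x) ^ 2 <> 0 -> Rabs (Hfun f x) <= C + eps) /\
      (* limsup_{x -> +oo} |H(f,x)| <= C *)
      (forall eps, 0 < eps -> exists M, 0 < M /\
         forall x, M < x ->
           f x ^ 2 + x ^ 2 * (Derive f x) ^ 2 <> 0 -> Rabs (Hfun f x) <= C + eps)) :
  amenable pos_half_line f.
Proof.
  destruct H2 as [C [_ [Hnear0 Hnearinf]]].
  assert (Hden : forall x, f x <> 0 -> f x ^ 2 + x ^ 2 * Derive f x ^ 2 <> 0).
  { intros x Hfx. pose proof (pow2_ge_0 (x * Derive f x)). simpl in *. nra. }
  destruct (Hfun_bounded f Hana Hnz (C + 1)) as [K [HK0 HK]].
  - destruct (Hnear0 1 Rlt_0_1) as [delta [Hdelta Hd]].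
    exists delta. split; [exact Hdelta|]. intros x Hx Hfx. apply Hd, Hden; assumption.
  - destruct (Hnearinf 1 Rlt_0_1) as [M [_ HM]].
    exists M. intros x Hx Hfx. apply HM, Hden; assumption.
  - exact (amenable_of_Hfun_bounded f K (analytic_derivatives f Hana) HK0 HK).
Qed.
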